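(* Let $D$ be a division algebra and $S$ a ring extension of $D$. Assume that elements $f_1,\ldots,f_d\in S$ are automorphic over $D$ and left linearly independent over $D$. Then $f=f_1+\cdots+f_d$ is automorphic over $D$ if and only if there is a single automorphism $\pi\in\mathrm{Aut}(D)$ such that $f,f_1,\ldots,f_d$ are all automorphic over $D$ with respect to $\pi$.
   Context: An element $a$ of a ring $S\supseteq D$ is automorphic over $D$ with respect to $\pi\in\mathrm{Aut}(D)$ if $ab=\pi(b)a$ for all $b\in D$; it is automorphic over $D$ if it is automorphic with respect to some automorphism of $D$. *)

From HB Require Import structures.
From mathcomp Require Import all_boot all_order all_algebra.
Set Implicit Arguments. Unset Strict Implicit. Unset Printing Implicit Defensive.
Import GRing.Theory.
Local Open Scope ring_scope.

Definition is_division_ring (D : unitRingType) : Prop :=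
  forall x : D, x != 0 -> x \is a GRing.unit.

Definition is_ring_aut (D : unitRingType) (pi : {rmorphism D -> D}) : Prop :=
  bijective pi.

Definition automorphic_wrt (D : unitRingType) (S : nzRingType)
  (iota : {rmorphism D -> S}) (pi : {rmorphism D -> D}) (a : S) : Prop :=
  forall b : D, a * iota b = iota (pi b) * a.

Definition automorphic (D : unitRingType) (S : nzRingType)
  (iota : {rmorphism D -> S}) (a : S) : Prop :=
  exists pi : {rmorphism D -> D}, is_ring_aut pi /\ automorphic_wrt iota pi a.

Definition left_lin_indep (D : unitRingType) (S : nzRingType)
  (iota : {rmorphism D -> S}) (d : nat) (f : 'I_d -> S) : Prop :=
  forall c : 'I_d -> D, \sum_(i < d) iota (c i) * f i = 0 -> forall i, c i = 0.

(* If [f = f_1 + ... + f_d] is automorphic w.r.t. [sigma] and each [f_i] w.r.t.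
   [pi_i], then for every [b] in [D]
     [sum_i iota (sigma b - pi_i b) * f_i = iota (sigma b) * f - f * iota b = 0],
   so left linear independence forces [pi_i b = sigma b]. *)

From HB Require Import structures.
From mathcomp Require Import all_boot all_order all_algebra.
From Stdlib Require Import IndefiniteDescription.
Import GRing.Theory.
Local Open Scope ring_scope.

Section AutomorphicSum.

Variables (D : unitRingType) (S : nzRingType) (iota : {rmorphism D -> S}).
Variables (d : nat) (f : 'I_d -> S) (pi : 'I_d -> {rmorphism D -> D}).
Hypothesis f_aut : forall i, automorphic_wrt iota (pi i) (f i).

Lemma automorphic_wrt_sum_defect (sigma : {rmorphism D -> D}) (b : D) :
  automorphic_wrt iota sigma (\sum_(i < d) f i) ->
  \sum_(i < d) iota (sigma b - pi i b) * f i = 0.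
Proof.
move=> /(_ b); rewrite mulr_suml mulr_sumr => sum_aut.
under eq_bigr do rewrite rmorphB mulrBl -f_aut.
by rewrite sumrB sum_aut subrr.
Qed.

Lemma automorphic_wrt_summands (sigma : {rmorphism D -> D}) :
  left_lin_indep iota f -> automorphic_wrt iota sigma (\sum_(i < d) f i) ->
  forall i, automorphic_wrt iota sigma (f i).
Proof.
move=> f_indep sum_aut i b.
have /eqP := f_indep _ (automorphic_wrt_sum_defect _ b sum_aut) i.
by rewrite subr_eq0 => /eqP ->; apply: f_aut.
Qed.

End AutomorphicSum.

Theorem lemma5p5 (D : unitRingType) (S : nzRingType)
  (iota : {rmorphism D -> S}) (d : nat) (f : 'I_d -> S) :
  is_division_ring D ->
  injective iota ->
  (forall i, automorphic iota (f i)) ->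
  left_lin_indep iota f ->
  (automorphic iota (\sum_(i < d) f i) <->
   exists pi : {rmorphism D -> D},
     is_ring_aut pi /\
     automorphic_wrt iota pi (\sum_(i < d) f i) /\
     (forall i, automorphic_wrt iota pi (f i))).
Proof.
move=> _ _ f_aut f_indep; split; last by case=> sigma [sigma_aut [sum_aut _]]; exists sigma.
case=> sigma [sigma_aut sum_aut]; exists sigma; do !split=> //.
have /functional_choice [pi pi_aut] :
    forall i, exists p : {rmorphism D -> D}, automorphic_wrt iota p (f i).
  by move=> i; have [p [_ ?]] := f_aut i; exists p.
exact: automorphic_wrt_summands pi_aut sigma f_indep sum_aut.
Qed.
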